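(* Assume there exists a cardinal $\vartheta$ with $\mathbf V_\vartheta\models\mathsf{ZFC}$; let $\vartheta$ be the least such and $V=\mathbf V_\vartheta$. Let $I$, $U$, ${}^\ast V$, ${}^\ast\!\in$, ${}^\ast\!=$, $r(\cdot)$ and $\Phi[\mathbf i]$ be as described in the context. Let $\Phi$ be an internal formula (built from $\in$ and $=$) with parameters in ${}^\ast V$, and let $r\ge r(\Phi)$. Then $\Phi$ is true in $\langle{}^\ast V;{}^\ast\!\in,{}^\ast\!=\rangle$ if and only if $\mathbf U i_r\,\mathbf U i_{r-1}\cdots\mathbf U i_1\,\big(\Phi[i_1,\dots,i_r]\text{ is true in }(V,\in)\big)$.
   Context: $I=\{i\in V: i\text{ finite}\}$. $\mathrm{Def}(V)$ is the collection of subsets of $V$ first-order definable in $(V,\in)$ with parameters from $V$. $U$ is an ultrafilter over $I$ such that (A) $\{i\in I:a\in i\}\in U$ for every $a\in V$, and (B) for every $P\subseteq I\times V$ in $\mathrm{Def}(V)$, $\{x\in V:\{i:\langle i,x\rangle\in P\}\in U\}\in\mathrm{Def}(V)$. Write $\mathbf U i\,\varphi(i)$ for $\{i\in I:\varphi(i)\}\in U$. For $r\in\omega$ let ${}^\ast V_r$ be the set of all functions $f:I^r\to V$ (with $I^0=\{\emptyset\}$), and ${}^\ast V=\bigcup_{r\in\omega}{}^\ast V_r$; for $z\in V$ put ${}^\ast z=\{\langle\emptyset,z\rangle\}\in{}^\ast V_0$. For $F\in{}^\ast V$, $r(F)$ is the unique $r$ with $F\in{}^\ast V_r$; for $q\ge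 r(F)$ and $\mathbf i=\langle i_1,\dots,i_q\rangle\in I^q$ put $F[\mathbf i]=F(i_1,\dots,i_{r(F)})$ (so ${}^\ast z[\mathbf i]=z$). For $F,G\in{}^\ast V$ with $r=\max\{r(F),r(G)\}$: $F\,{}^\ast\!\!\in G$ iff $\mathbf U i_r\cdots\mathbf U i_1\,(F[\mathbf i]\in G[\mathbf i])$, and $F\,{}^\ast\!\!=G$ iff $\mathbf U i_r\cdots\mathbf U i_1\,(F[\mathbf i]=G[\mathbf i])$, where $\mathbf i=\langle i_1,\dots,i_r\rangle$. For a formula $\Phi$ with parameters in ${}^\ast V$, $r(\Phi)=\max\{r(F):F\text{ occurs in }\Phi\}$, and for $r\ge r(\Phi)$, $\mathbf i\in I^r$, $\Phi[\mathbf i]$ is obtained by replacing each parameter $F$ by $F[\mathbf i]$ (a formula with parameters in $V$). *)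

From Stdlib Require Import List Arith Lia.
Import ListNotations.
Set Implicit Arguments.

(* Variables are de Bruijn indices: TVar 0 is the most recently bound one. *)
Inductive term (P : Type) : Type :=
  | TVar (n : nat)
  | TPar (p : P).

Inductive form (P : Type) : Type :=
  | FMem (t u : term P)
  | FEq  (t u : term P)
  | FFalse
  | FNot (f : form P)
  | FAnd (f g : form P)
  | FOr  (f g : form P)
  | FImp (f g : form P)
  | FAll (f : form P)
  | FEx  (f : form P).

Arguments TVar {P} n.
Arguments FFalse {P}.

Definition term_free_below {P} (k : nat) (t : term P) : Prop :=
  match t with TVar n => n < k | TPar _ => True end.

Fixpoint free_below {P} (k : nat) (f : form P) : Prop :=
  match f with
  | FMem t u | FEq t u => term_free_below k t /\ term_free_below k u
  | FFalse => True
  | FNot f => free_below k f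
  | FAnd f g | FOr f g | FImp f g => free_below k f /\ free_below k g
  | FAll f | FEx f => free_below (S k) f
  end.

Definition closed {P} (f : form P) : Prop := free_below 0 f.

Section Sat.
Variables (D P : Type) (memD eqD : D -> D -> Prop) (ip : P -> D).

Definition tval (env : list D) (t : term P) : option D :=
  match t with TVar n => nth_error env n | TPar p => Some (ip p) end.

Definition liftR (R : D -> D -> Prop) (a b : option D) : Prop :=
  match a, b with Some x, Some y => R x y | _, _ => False end.

Fixpoint sat (env : list D) (f : form P) : Prop :=
  match f with
  | FMem t u => liftR memD (tval env t) (tval env u)
  | FEq t u => liftR eqD (tval env t) (tval env u)
  | FFalse => False
  | FNot f => ~ sat env f
  | FAnd f g => sat env f /\ sat env g
  | FOr f g => sat env f \/ sat env g
  | FImp f g => sat env f -> sat env g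
  | FAll f => forall d : D, sat (d :: env) f
  | FEx f => exists d : D, sat (d :: env) f
  end.
End Sat.

Section Star.
Variables (V : Type) (mem : V -> V -> Prop).

Definition satV (env : list V) (f : form V) : Prop :=
  sat mem (@eq V) (fun x => x) env f.

Definition finite_el (x : V) : Prop :=
  exists l : list V, forall y, mem y x <-> In y l.

Definition Iidx : Type := { x : V | finite_el x }.

Definition definable1 (A : V -> Prop) : Prop :=
  exists phi : form V, free_below 1 phi /\ forall x, A x <-> satV [x] phi.

Definition definable2 (Pr : Iidx -> V -> Prop) : Prop :=
  exists phi : form V, free_below 2 phi /\
    forall (i : Iidx) (x : V), Pr i x <-> satV [proj1_sig i; x] phi.

Record ultrafilter (U : (Iidx -> Prop) -> Prop) : Prop := {
  uf_full  : U (fun _ => True);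
  uf_proper : ~ U (fun _ => False);
  uf_up    : forall A B : Iidx -> Prop, U A -> (forall i, A i -> B i) -> U B;
  uf_inter : forall A B : Iidx -> Prop, U A -> U B -> U (fun i => A i /\ B i);
  uf_ult   : forall A : Iidx -> Prop, U A \/ U (fun i => ~ A i)
}.

Definition condA (U : (Iidx -> Prop) -> Prop) : Prop :=
  forall a : V, U (fun i => mem a (proj1_sig i)).

Definition condB (U : (Iidx -> Prop) -> Prop) : Prop :=
  forall Pr : Iidx -> V -> Prop, definable2 Pr ->
    definable1 (fun x => U (fun i => Pr i x)).

(* iterated quantifier:  Uq U r psi  =  U i_r ... U i_1  psi [i_1; ...; i_r] *)
Fixpoint Uq (U : (Iidx -> Prop) -> Prop) (r : nat) (psi : list Iidx -> Prop)
  : Prop :=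
  match r with
  | 0 => psi []
  | S n => U (fun i => Uq U n (fun l => psi (l ++ [i])))
  end.

Definition tup (r : nat) : Type := { l : list Iidx | length l = r }.

(* *V = ⋃_r *V_r, *V_r = functions I^r -> V  (rk F = r(F)) *)
Record starV : Type := mkStar { rk : nat; fn : tup rk -> V }.

Definition star_const (z : V) : starV := @mkStar 0 (fun _ => z).

(* F[i] for i = <i_1,...,i_q>, q >= r(F):  F(i_1,...,i_{r(F)}) *)
Definition evalF (F : starV) (i : list Iidx) (h : rk F <= length i) : V :=
  fn F (exist _ (firstn (rk F) i) (firstn_length_le i h)).

Definition starMem (U : (Iidx -> Prop) -> Prop) (F G : starV) : Prop :=
  Uq U (Nat.max (rk F) (rk G))
     (fun i => forall (h1 : rk F <= length i) (h2 : rk G <= length i),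
                 mem (evalF F i h1) (evalF G i h2)).

Definition starEq (U : (Iidx -> Prop) -> Prop) (F G : starV) : Prop :=
  Uq U (Nat.max (rk F) (rk G))
     (fun i => forall (h1 : rk F <= length i) (h2 : rk G <= length i),
                 evalF F i h1 = evalF G i h2).

Definition satStar (U : (Iidx -> Prop) -> Prop) (env : list starV)
  (f : form starV) : Prop :=
  sat (starMem U) (starEq U) (fun F => F) env f.

Definition rank_t (t : term starV) : nat :=
  match t with TVar _ => 0 | TPar F => rk F end.

Fixpoint rank_f (f : form starV) : nat :=
  match f with
  | FMem t u | FEq t u => Nat.max (rank_t t) (rank_t u)
  | FFalse => 0
  | FNot f => rank_f f
  | FAnd f g | FOr f g | FImp f g => Nat.max (rank_f f) (rank_f g)
  | FAll f | FEx f => rank_f f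
  end.

Definition subst_t (t : term starV) (i : list Iidx)
  : rank_t t <= length i -> term V :=
  match t as t0 return rank_t t0 <= length i -> term V with
  | TVar n => fun _ => TVar n
  | TPar F => fun h => TPar (evalF F i h)
  end.

Fixpoint subst_f (f : form starV) (i : list Iidx) {struct f}
  : rank_f f <= length i -> form V :=
  match f as f0 return rank_f f0 <= length i -> form V with
  | FMem t u => fun h =>
      FMem (subst_t t i (Nat.le_trans _ _ _ (Nat.le_max_l _ _) h))
           (subst_t u i (Nat.le_trans _ _ _ (Nat.le_max_r _ _) h))
  | FEq t u => fun h =>
      FEq (subst_t t i (Nat.le_trans _ _ _ (Nat.le_max_l _ _) h))
          (subst_t u i (Nat.le_trans _ _ _ (Nat.le_max_r _ _) h))
  | FFalse => fun _ => FFalse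
  | FNot g => fun h => FNot (subst_f g i h)
  | FAnd g k => fun h =>
      FAnd (subst_f g i (Nat.le_trans _ _ _ (Nat.le_max_l _ _) h))
           (subst_f k i (Nat.le_trans _ _ _ (Nat.le_max_r _ _) h))
  | FOr g k => fun h =>
      FOr (subst_f g i (Nat.le_trans _ _ _ (Nat.le_max_l _ _) h))
          (subst_f k i (Nat.le_trans _ _ _ (Nat.le_max_r _ _) h))
  | FImp g k => fun h =>
      FImp (subst_f g i (Nat.le_trans _ _ _ (Nat.le_max_l _ _) h))
           (subst_f k i (Nat.le_trans _ _ _ (Nat.le_max_r _ _) h))
  | FAll g => fun h => FAll (subst_f g i h)
  | FEx g => fun h => FEx (subst_f g i h)
  end.

End Star.

(* Łoś's theorem, by induction on the formula.  The iterated quantifier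
   [Uq U r] commutes with all Boolean connectives, like a single ultrafilter
   quantifier, and adding quantifiers over indices on which nothing depends
   changes nothing; so every subformula may be evaluated with as many indices
   as its parameters need.  In the existential step a witness is chosen for
   every tuple of indices separately; these choices form a function
   [I^r -> V], i.e. an element of [*V], so no definability is needed. *)

From Stdlib Require Import List Arith Lia Classical ClassicalEpsilon Eqdep_dec.
Import ListNotations.

Lemma firstn_app_le (A : Type) (n : nat) (l l' : list A) :
  n <= length l -> firstn n (l ++ l') = firstn n l.
Proof.
  intro Hn. rewrite firstn_app. replace (n - length l) with 0 by lia.
  apply app_nil_r.
Qed.

Section UltrafilterQuantifier.
Context {V : Type} {mem : V -> V -> Prop} {U : (Iidx mem -> Prop) -> Prop}.
Hypothesis HU : ultrafilter U.

Lemma ultrafilter_inhabited : inhabited (Iidx mem).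
Proof.
  apply NNPP; intro Hempty. apply (uf_proper HU).
  apply (uf_up HU (fun _ => True)); [apply (uf_full HU) |].
  intros i _. exact (Hempty (inhabits i)).
Qed.

Lemma U_ext (A B : Iidx mem -> Prop) : (forall i, A i <-> B i) -> (U A <-> U B).
Proof. intro HAB; split; intro; eapply (uf_up HU); eauto; apply HAB. Qed.

Lemma U_const (P : Prop) : U (fun _ => P) <-> P.
Proof.
  split.
  - intro HP. apply NNPP; intro HnP. apply (uf_proper HU).
    exact (uf_up HU _ _ HP (fun _ p => HnP p)).
  - intro p. exact (uf_up HU _ _ (uf_full HU) (fun _ _ => p)).
Qed.

Lemma U_not (A : Iidx mem -> Prop) : U (fun i => ~ A i) <-> ~ U A.
Proof.
  split.
  - intros HnA HA. apply (uf_proper HU).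
    exact (uf_up HU _ _ (uf_inter HU _ _ HnA HA) (fun _ Hi => proj1 Hi (proj2 Hi))).
  - intro HnA. destruct (uf_ult HU A); tauto.
Qed.

Lemma U_and (A B : Iidx mem -> Prop) : U (fun i => A i /\ B i) <-> U A /\ U B.
Proof.
  split.
  - intro HAB. split; eapply (uf_up HU); eauto; intros i []; auto.
  - intros [HA HB]. exact (uf_inter HU _ _ HA HB).
Qed.

Lemma Uq_mono r : forall psi chi : list (Iidx mem) -> Prop,
  (forall l, length l = r -> psi l -> chi l) -> Uq U r psi -> Uq U r chi.
Proof.
  induction r as [| r IH]; simpl; intros psi chi Himp Hpsi.
  - exact (Himp [] eq_refl Hpsi).
  - eapply (uf_up HU); [exact Hpsi |]. intros i. apply IH.
    intros l Hl. apply Himp. rewrite length_app, Hl. simpl. lia.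
Qed.

Lemma Uq_ext r (psi chi : list (Iidx mem) -> Prop) :
  (forall l, length l = r -> (psi l <-> chi l)) -> (Uq U r psi <-> Uq U r chi).
Proof. intro Heq; split; apply Uq_mono; firstorder. Qed.

Lemma Uq_const r (P : Prop) : Uq U r (fun _ => P) <-> P.
Proof.
  induction r as [| r IH]; simpl; [tauto |].
  rewrite <- (U_const P). apply U_ext. intro; apply IH.
Qed.

Lemma Uq_not r : forall psi, Uq U r (fun l => ~ psi l) <-> ~ Uq U r psi.
Proof.
  induction r as [| r IH]; simpl; intros; [tauto |].
  rewrite <- U_not. apply U_ext. intro; apply IH.
Qed.

Lemma Uq_and r : forall psi chi,
  Uq U r (fun l => psi l /\ chi l) <-> Uq U r psi /\ Uq U r chi.
Proof.
  induction r as [| r IH]; simpl; intros; [tauto |].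
  rewrite <- U_and. apply U_ext. intro; apply IH.
Qed.

Lemma Uq_or r psi chi :
  Uq U r (fun l => psi l \/ chi l) <-> Uq U r psi \/ Uq U r chi.
Proof.
  rewrite (Uq_ext r _ (fun l => ~ (~ psi l /\ ~ chi l))) by (intros; tauto).
  rewrite Uq_not, Uq_and, !Uq_not. tauto.
Qed.

Lemma Uq_imp r psi chi :
  Uq U r (fun l => psi l -> chi l) <-> (Uq U r psi -> Uq U r chi).
Proof.
  rewrite (Uq_ext r _ (fun l => ~ psi l \/ chi l)) by (intros; tauto).
  rewrite Uq_or, Uq_not. tauto.
Qed.

Lemma Uq_firstn r k : forall chi,
  Uq U (r + k) (fun l => chi (firstn r l)) <-> Uq U r chi.
Proof.
  induction k as [| k IH]; intro chi.
  - rewrite Nat.add_0_r. apply Uq_ext. intros l <-. rewrite firstn_all. tauto.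
  - rewrite Nat.add_succ_r. simpl.
    rewrite (U_ext _ (fun _ => Uq U (r + k) (fun l => chi (firstn r l)))).
    + rewrite U_const. apply IH.
    + intro i. apply Uq_ext. intros l Hl. rewrite firstn_app_le by lia. tauto.
Qed.

Lemma Uq_depends_firstn r r' psi : r <= r' ->
  (forall l, length l = r' -> (psi (firstn r l) <-> psi l)) ->
  (Uq U r' psi <-> Uq U r psi).
Proof.
  intros Hle Hpsi. replace r' with (r + (r' - r)) in * by lia.
  rewrite <- (Uq_firstn r (r' - r)). apply Uq_ext. intros l Hl.
  symmetry. apply Hpsi, Hl.
Qed.

End UltrafilterQuantifier.

Section Evaluation.
Context {V : Type} {mem : V -> V -> Prop}.
Variable i0 : Iidx mem.

Lemma fn_eq (F : starV mem) (t t' : tup mem (rk F)) :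
  proj1_sig t = proj1_sig t' -> fn F t = fn F t'.
Proof.
  destruct t as [l Hl], t' as [l' Hl']; simpl; intros <-.
  rewrite (UIP_nat _ _ Hl Hl'). reflexivity.
Qed.

Lemma length_firstn_pad (l : list (Iidx mem)) n :
  length (firstn n (l ++ repeat i0 n)) = n.
Proof. apply firstn_length_le. rewrite length_app, repeat_length. lia. Qed.

(* [F[l]] for all [l]: a too short [l] is padded with [i0]. *)
Definition eval (F : starV mem) (l : list (Iidx mem)) : V :=
  fn F (exist _ _ (length_firstn_pad l (rk F))).

Lemma evalF_eval F l (h : rk F <= length l) : evalF F l h = eval F l.
Proof. apply fn_eq. simpl. symmetry. apply firstn_app_le, h. Qed.

Lemma eval_firstn F l r : rk F <= r -> r <= length l ->
  eval F (firstn r l) = eval F l.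
Proof.
  intros HF Hl. apply fn_eq. simpl.
  rewrite !firstn_app_le, firstn_firstn by (rewrite ?length_firstn; lia).
  f_equal. lia.
Qed.

Lemma starV_witness (Q : list (Iidx mem) -> V -> Prop) r :
  exists G : starV mem, rk G = r /\
    forall l, length l = r -> (exists x, Q l x) -> Q l (eval G l).
Proof.
  exists (@mkStar V mem r
            (fun t => epsilon (inhabits (proj1_sig i0)) (Q (proj1_sig t)))).
  split; [reflexivity |]. intros l Hl Hex. unfold eval; simpl.
  rewrite firstn_app_le, <- Hl, firstn_all by lia.
  exact (epsilon_spec _ _ Hex).
Qed.

Lemma satV_subst_f f : forall venv l h,
  satV mem venv (subst_f f l h) <-> sat mem (@eq V) (fun F => eval F l) venv f.
Proof.
  unfold satV.
  induction f as [t u | t u | | f IH | f IH g IHg | f IH g IHg | f IH g IHg | f IH | f IH];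
    intros venv l h; simpl;
    try (destruct t; destruct u; simpl; rewrite ?evalF_eval; tauto);
    try (rewrite IH, IHg; tauto).
  - tauto.
  - rewrite IH. tauto.
  - split; intros Hf d; apply (IH (d :: venv) l h), Hf.
  - split; intros [d Hf]; exists d; apply (IH (d :: venv) l h), Hf.
Qed.

Lemma sat_params_ext (ip ip' : starV mem -> V) f : forall venv,
  (forall F, rk F <= rank_f f -> ip F = ip' F) ->
  (sat mem (@eq V) ip venv f <-> sat mem (@eq V) ip' venv f).
Proof.
  induction f as [t u | t u | | f IH | f IH g IHg | f IH g IHg | f IH g IHg | f IH | f IH];
    intros venv Hip; simpl in *;
    try (destruct t; destruct u; simpl in *; rewrite ?Hip by lia; tauto);
    try (rewrite IH, IHg by (intros; apply Hip; lia); tauto).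
  - tauto.
  - rewrite IH by exact Hip. tauto.
  - split; intros Hf d; apply (IH (d :: venv) Hip), Hf.
  - split; intros [d Hf]; exists d; apply (IH (d :: venv) Hip), Hf.
Qed.

Definition holds (f : form (starV mem)) (env : list (starV mem))
  (l : list (Iidx mem)) : Prop :=
  sat mem (@eq V) (fun F => eval F l) (map (fun F => eval F l) env) f.

Lemma holds_firstn f env l r : rank_f f <= r -> Forall (fun F => rk F <= r) env ->
  r <= length l -> (holds f env (firstn r l) <-> holds f env l).
Proof.
  intros Hf Henv Hl. unfold holds.
  replace (map (fun F => eval F (firstn r l)) env) with (map (fun F => eval F l) env).
  - apply sat_params_ext. intros F HF. apply eval_firstn; lia.
  - apply map_ext_Forall. eapply Forall_impl; [| exact Henv].
    intros F HF. symmetry. apply eval_firstn; [exact HF | exact Hl].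
Qed.

End Evaluation.

Section Los.
Context {V : Type} {mem : V -> V -> Prop} {U : (Iidx mem -> Prop) -> Prop}.
Hypothesis HU : ultrafilter U.
Variable i0 : Iidx mem.

Local Notation eval := (eval i0).
Local Notation holds := (holds i0).

Lemma starRel_Uq (R : V -> V -> Prop) F G r : rk F <= r -> rk G <= r ->
  Uq U (Nat.max (rk F) (rk G))
     (fun l => forall h1 h2, R (evalF F l h1) (evalF G l h2))
  <-> Uq U r (fun l => R (eval F l) (eval G l)).
Proof.
  intros HF HG.
  rewrite (Uq_ext HU _ _ (fun l => R (eval F l) (eval G l))).
  - symmetry. apply (Uq_depends_firstn HU); [lia |].
    intros l Hl. rewrite !eval_firstn by lia. tauto.
  - intros l Hl. split.
    + intro HR. specialize (HR ltac:(lia) ltac:(lia)).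
      rewrite !(evalF_eval i0) in HR. exact HR.
    + intros HR h1 h2. rewrite !(evalF_eval i0). exact HR.
Qed.

Lemma tval_map env t l :
  tval (fun F => eval F l) (map (fun F => eval F l) env) t
  = option_map (fun F => eval F l) (tval (fun F : starV mem => F) env t).
Proof. destruct t; simpl; [apply nth_error_map | reflexivity]. Qed.

Lemma tval_rank env t r F : tval (fun F => F) env t = Some F ->
  Forall (fun F : starV mem => rk F <= r) env -> rank_t t <= r -> rk F <= r.
Proof.
  rewrite Forall_forall. destruct t; simpl; intros HF Henv Ht.
  - exact (Henv F (nth_error_In _ _ HF)).
  - injection HF as <-. exact Ht.
Qed.

Lemma holds_atom (R : V -> V -> Prop) (starR : starV mem -> starV mem -> Prop)
  env t u r :
  (forall F G, rk F <= r -> rk G <= r ->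
     starR F G <-> Uq U r (fun l => R (eval F l) (eval G l))) ->
  Forall (fun F => rk F <= r) env -> rank_t t <= r -> rank_t u <= r ->
  liftR starR (tval (fun F => F) env t) (tval (fun F => F) env u)
  <-> Uq U r (fun l =>
        liftR R (tval (fun F => eval F l) (map (fun F => eval F l) env) t)
                (tval (fun F => eval F l) (map (fun F => eval F l) env) u)).
Proof.
  intros HR Henv Ht Hu.
  rewrite (Uq_ext HU _ _ (fun l =>
             liftR R (option_map (fun F => eval F l) (tval (fun F => F) env t))
                     (option_map (fun F => eval F l) (tval (fun F => F) env u))))
    by (intros; rewrite !tval_map; reflexivity).
  destruct (tval _ env t) as [F |] eqn:EF; destruct (tval _ env u) as [G |] eqn:EG;
    simpl; try (rewrite (Uq_const HU); tauto).
  apply HR; eapply tval_rank; eassumption.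
Qed.

Definition los_for (f : form (starV mem)) : Prop :=
  forall env r, rank_f f <= r -> Forall (fun F => rk F <= r) env ->
    (satStar U env f <-> Uq U r (holds f env)).

Lemma Forall_rank_max env r d : Forall (fun F : starV mem => rk F <= r) env ->
  Forall (fun F => rk F <= Nat.max r (rk d)) (d :: env).
Proof.
  intro Henv. constructor; [lia |].
  eapply Forall_impl; [| exact Henv]. simpl. lia.
Qed.

Lemma los_ex f : los_for f -> los_for (FEx f).
Proof.
  intros IH env r Hf Henv. simpl in Hf. split.
  - intros [d Hd]. set (r' := Nat.max r (rk d)).
    apply (IH (d :: env) r') in Hd; [| lia | apply Forall_rank_max, Henv].
    apply (Uq_depends_firstn HU r r'); [lia | |].
    + intros l Hl. apply holds_firstn; simpl; [lia | exact Henv | lia].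
    + eapply (Uq_mono HU); [| exact Hd]. intros l _ Hl. eexists; exact Hl.
  - intro Hex.
    destruct (starV_witness i0
                (fun l x => sat mem eq (fun F => eval F l)
                                    (x :: map (fun F => eval F l) env) f) r)
      as [G [HG HGwit]].
    exists G. apply (IH (G :: env) r Hf); [constructor; [lia | exact Henv] |].
    exact (Uq_mono HU _ _ _ HGwit Hex).
Qed.

Lemma los_all f : los_for f -> los_for (FAll f).
Proof.
  intros IH env r Hf Henv. simpl in Hf. split.
  - intro Hall. apply NNPP. rewrite <- (Uq_not HU). intro Hnot.
    destruct (starV_witness i0
                (fun l x => ~ sat mem eq (fun F => eval F l)
                                    (x :: map (fun F => eval F l) env) f) r)
      as [G [HG HGwit]].
    assert (HnG : Uq U r (fun l => ~ holds f (G :: env) l)).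
    { eapply (Uq_mono HU); [| exact Hnot]. intros l Hl Hn. apply HGwit; [exact Hl |].
      apply not_all_ex_not, Hn. }
    rewrite (Uq_not HU), <- (IH (G :: env) r Hf) in HnG
      by (constructor; [lia | exact Henv]).
    exact (HnG (Hall G)).
  - intros Hall d. set (r' := Nat.max r (rk d)).
    apply (IH (d :: env) r'); [lia | apply Forall_rank_max, Henv |].
    rewrite <- (Uq_depends_firstn HU r r') in Hall; [| lia |].
    + eapply (Uq_mono HU); [| exact Hall]. intros l _ Hl. apply Hl.
    + intros l Hl. apply holds_firstn; simpl; [lia | exact Henv | lia].
Qed.

Theorem los f : los_for f.
Proof.
  induction f as [t u | t u | | f IH | f IH g IHg | f IH g IHg | f IH g IHg | f IH | f IH];
    intros env r Hf Henv; simpl in Hf.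
  - apply holds_atom; try (exact Henv || lia).
    intros F G HF HG. apply starRel_Uq; assumption.
  - apply holds_atom; try (exact Henv || lia).
    intros F G HF HG. apply starRel_Uq; assumption.
  - symmetry. exact (Uq_const HU r False).
  - unfold satStar; simpl. rewrite (IH env r Hf Henv). symmetry. apply (Uq_not HU).
  - unfold satStar; simpl. rewrite (IH env r), (IHg env r) by (lia || exact Henv).
    symmetry. apply (Uq_and HU).
  - unfold satStar; simpl. rewrite (IH env r), (IHg env r) by (lia || exact Henv).
    symmetry. apply (Uq_or HU).
  - unfold satStar; simpl. rewrite (IH env r), (IHg env r) by (lia || exact Henv).
    symmetry. apply (Uq_imp HU).
  - exact (los_all f IH env r Hf Henv).
  - exact (los_ex f IH env r Hf Henv).
Qed.

End Los.

Theorem lemma6 (V : Type) (mem : V -> V -> Prop)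
  (U : (Iidx mem -> Prop) -> Prop)
  (HU : ultrafilter U) (HA : condA U) (HB : condB U)
  (Phi : form (starV mem)) (Hcl : closed Phi)
  (r : nat) (Hr : rank_f Phi <= r) :
  satStar U nil Phi <->
  Uq U r (fun i => forall h : rank_f Phi <= length i,
                     satV mem nil (subst_f Phi i h)).
Proof.
  destruct (ultrafilter_inhabited HU) as [i0].
  unfold satStar. rewrite (los HU i0 Phi nil r Hr (Forall_nil _)).
  apply (Uq_ext HU). intros l Hl. split.
  - intros Hholds h. exact (proj2 (satV_subst_f i0 Phi nil l h) Hholds).
  - intro Hsubst. assert (h : rank_f Phi <= length l) by lia.
    exact (proj1 (satV_subst_f i0 Phi nil l h) (Hsubst h)).
Qed.
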